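(* Let $\Pi\subset\mathbb R^2$ be a convex quadrilateral with counterclockwise extreme points $\mathbf v_1,\dots,\mathbf v_4$. For $\mathbf x\in\Pi$ let $D(\mathbf x)=\big(q(\mathbf x,\mathbf v_i)-w(\mathbf x,\mathbf v_i)\big)_{i=1}^{3}\in\mathbb R^3$ be the G$-$W discrepancy vector. Then any two non-zero vectors $D(\mathbf x),D(\mathbf y)$ ($\mathbf x,\mathbf y\in\Pi$) are parallel.
   Context: Gibbs coordinates $q(\mathbf x,\mathbf v_i)$: the unique probability distribution on the vertices with $\sum_iq(\mathbf x,\mathbf v_i)\mathbf v_i=\mathbf x$ maximizing the entropy $-\sum_i q\log q$ ($0\log0=0$). Wachspress coordinates: with $A(\mathbf p,\mathbf q,\mathbf r)=\tfrac12\det[\mathbf q-\mathbf p,\mathbf r-\mathbf p]$ and indices mod $4$, for interior $\mathbf x$, $w_i(\mathbf x)=A(\mathbf v_{i-1},\mathbf v_i,\mathbf v_{i+1})/(A(\mathbf v_{i-1},\mathbf v_i,\mathbf x)A(\mathbf x,\mathbf v_i,\mathbf v_{i+1}))$ and $w(\mathbf x,\mathbf v_i)=w_i(\mathbf x)/\sum_jw_j(\mathbf x)$; on an edge $[\mathbf v_j,\mathbf v_{j+1}]$ they are the barycentric coordinates with respect to $\mathbf v_j,\mathbf v_{j+1}$ and $0$ elsewhere. *)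

From HB Require Import structures.
From mathcomp Require Import all_boot all_order all_algebra.
From mathcomp Require Import all_classical all_reals all_analysis.
Set Implicit Arguments. Unset Strict Implicit. Unset Printing Implicit Defensive.
Import Order.TTheory GRing.Theory Num.Theory.
Local Open Scope ring_scope.

Section Quad.
Variable R : realType.
Notation pt := (R * R)%type.

Definition area (p q r : pt) : R :=
  ((q.1 - p.1) * (r.2 - p.2) - (q.2 - p.2) * (r.1 - p.1)) / 2.

Definition nxt (i : 'I_4) : 'I_4 := ordS i.
Definition prv (i : 'I_4) : 'I_4 := ord_pred i.

(* v_1..v_4 are the extreme points of a convex quadrilateral, listed
   counterclockwise: every other vertex lies strictly to the left of each
   directed edge v_i -> v_{i+1}. *)
Definition ccw_convex_quad (V : 'I_4 -> pt) : Prop :=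
  forall i j : 'I_4, j != i -> j != nxt i -> 0 < area (V i) (V (nxt i)) (V j).

Definition prob4 (l : 'I_4 -> R) : Prop :=
  (forall i, 0 <= l i) /\ \sum_i l i = 1.

Definition bary (V : 'I_4 -> pt) (l : 'I_4 -> R) (x : pt) : Prop :=
  \sum_i l i * (V i).1 = x.1 /\ \sum_i l i * (V i).2 = x.2.

Definition in_poly (V : 'I_4 -> pt) (x : pt) : Prop :=
  exists l, prob4 l /\ bary V l x.

Definition xlnx (t : R) : R := if t == 0 then 0 else t * ln t.
Definition entropy (l : 'I_4 -> R) : R := - \sum_i xlnx (l i).

(* q are the Gibbs coordinates of x: the probability distribution on the
   vertices with barycenter x maximizing the entropy (it is unique). *)
Definition is_gibbs (V : 'I_4 -> pt) (x : pt) (q : 'I_4 -> R) : Prop :=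
  prob4 q /\ bary V q x /\
  forall p, prob4 p -> bary V p x -> entropy p <= entropy q.

Definition in_interior (V : 'I_4 -> pt) (x : pt) : Prop :=
  forall i : 'I_4, 0 < area (V i) (V (nxt i)) x.

Definition wach_w (V : 'I_4 -> pt) (x : pt) (i : 'I_4) : R :=
  area (V (prv i)) (V i) (V (nxt i)) /
  (area (V (prv i)) (V i) x * area x (V i) (V (nxt i))).

Definition is_wachspress (V : 'I_4 -> pt) (x : pt) (w : 'I_4 -> R) : Prop :=
  (in_interior V x ->
     forall i, w i = wach_w V x i / \sum_j wach_w V x j) /\
  (forall (j : 'I_4) (t : R), 0 <= t <= 1 ->
     x = ((1 - t) * (V j).1 + t * (V (nxt j)).1,
          (1 - t) * (V j).2 + t * (V (nxt j)).2) ->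
     forall i, w i = (if i == j then 1 - t else 0)
                     + (if i == nxt j then t else 0)).

Definition discrepancy (q w : 'I_4 -> R) : 'rV[R]_3 :=
  \row_(i < 3) (q (widen_ord (leqnSn 3) i) - w (widen_ord (leqnSn 3) i)).

End Quad.

From HB Require Import structures.
From mathcomp Require Import all_boot all_order all_algebra.
From mathcomp Require Import all_classical all_reals all_analysis.
From mathcomp Require Import ring.
Import Order.TTheory GRing.Theory Num.Theory.
Local Open Scope ring_scope.

(* Both the Gibbs and the Wachspress coordinates of x are affine coordinates:
   they sum to 1 and have barycenter x.  For Wachspress coordinates this is
   the classical identity sum_i w_i (v_i - x) = 0 at interior points, and the
   definition on the boundary (a point of the hull that is not interior lies
   on an edge).  Hence q - w lies in the kernel of l |-> (sum_i l_i,
   sum_i l_i v_i), which is a line because v_1, v_2, v_3 are affinely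
   independent: by Cramer's rule a kernel vector d satisfies
   A(v_1,v_2,v_3) d_i = -/+ d_4 A(other three vertices) for i <= 3, so d is
   determined by d_4, and d_4 = 0 forces d = 0. *)

Definition o0 : 'I_4 := @Ordinal 4 0 isT.
Definition o1 : 'I_4 := @Ordinal 4 1 isT.
Definition o2 : 'I_4 := @Ordinal 4 2 isT.
Definition o3 : 'I_4 := @Ordinal 4 3 isT.

Lemma ord4P (i : 'I_4) : [\/ i = o0, i = o1, i = o2 | i = o3].
Proof.
case: i => [[|[|[|[|n]]]] lt_i4] //.
- by apply: Or41; apply/val_inj.
- by apply: Or42; apply/val_inj.
- by apply: Or43; apply/val_inj.
- by apply: Or44; apply/val_inj.
Qed.

Lemma big_ord4 (R : nmodType) (F : 'I_4 -> R) :
  \sum_i F i = F o0 + F o1 + F o2 + F o3.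
Proof.
rewrite !big_ord_recr big_ord0 /= add0r.
by congr (_ + _ + _ + _); congr (F _); apply/val_inj.
Qed.

Lemma nxt0 : nxt o0 = o1. Proof. exact/val_inj. Qed.
Lemma nxt1 : nxt o1 = o2. Proof. exact/val_inj. Qed.
Lemma nxt2 : nxt o2 = o3. Proof. exact/val_inj. Qed.
Lemma nxt3 : nxt o3 = o0. Proof. exact/val_inj. Qed.
Lemma prv0 : prv o0 = o3. Proof. exact/val_inj. Qed.
Lemma prv1 : prv o1 = o0. Proof. exact/val_inj. Qed.
Lemma prv2 : prv o2 = o1. Proof. exact/val_inj. Qed.
Lemma prv3 : prv o3 = o2. Proof. exact/val_inj. Qed.

Lemma nxt_prv (i : 'I_4) : nxt (prv i) = i.
Proof. by case: (ord4P i) => ->; apply/val_inj. Qed.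

Lemma nxt_neq (i : 'I_4) : nxt i != i.
Proof. by case: (ord4P i) => ->. Qed.

Section Quadrilateral.
Variable R : realType.
Set Implicit Arguments.
Unset Strict Implicit.
Implicit Types (V : 'I_4 -> (R * R)%type) (p q x : (R * R)%type).
Implicit Types (l d e w : 'I_4 -> R).

Definition affine_coords V x l := \sum_i l i = 1 /\ bary V l x.

Definition affine_null V d :=
  [/\ \sum_i d i = 0, \sum_i d i * (V i).1 = 0 & \sum_i d i * (V i).2 = 0].

Lemma gibbs_affine_coords V x l : is_gibbs V x l -> affine_coords V x l.
Proof. by case=> [[_ sum_l] [bary_l _]]. Qed.

Lemma affine_coords_sub V x l l' :
  affine_coords V x l -> affine_coords V x l' ->
  affine_null V (fun i => l i - l' i).
Proof.
move=> [sum_l [l1 l2]] [sum_l' [l'1 l'2]].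
by split; rewrite ?sumrB ?sum_l ?sum_l' ?subrr //;
  under eq_bigr do rewrite mulrBl; rewrite sumrB ?l1 ?l'1 ?l2 ?l'2 subrr.
Qed.

Lemma area_cycle x p q : area x p q = area p q x.
Proof. by case: x p q => [x1 x2] [p1 p2] [q1 q2]; rewrite /area /=; ring. Qed.

Lemma area_xyx p q : area p q p = 0.
Proof. by case: p q => [p1 p2] [q1 q2]; rewrite /area /=; ring. Qed.

Lemma area_xyy p q : area p q q = 0.
Proof. by case: p q => [p1 p2] [q1 q2]; rewrite /area /=; ring. Qed.

Lemma area_affine V l p q x : affine_coords V x l ->
  area p q x = \sum_i l i * area p q (V i).
Proof.
rewrite /affine_coords /bary !big_ord4; case: x => x1 x2 [sum_l [] /= <- <-].
have -> : l o3 = 1 - l o0 - l o1 - l o2 by rewrite -sum_l; ring.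
case: p q (V o0) (V o1) (V o2) (V o3) => [p1 p2] [q1 q2] [a0 b0] [a1 b1] [a2 b2] [a3 b3].
rewrite /area /=; ring.
Qed.

(* The other two vertices lie strictly left of the edge, so a convex
   combination on or right of it puts no mass on them. *)
Lemma hull_edge_support V l x k :
  ccw_convex_quad V -> prob4 l -> bary V l x ->
  area (V k) (V (nxt k)) x <= 0 ->
  forall j, j != k -> j != nxt k -> l j = 0.
Proof.
move=> convV [l_ge0 sum_l] bary_l x_right.
have term_ge0 i : 0 <= l i * area (V k) (V (nxt k)) (V i).
  apply: mulr_ge0 => //.
  have [->|ik] := eqVneq i k; first by rewrite area_xyx.
  have [->|ink] := eqVneq i (nxt k); first by rewrite area_xyy.
  exact/ltW/convV.
have sum_terms0 : \sum_i l i * area (V k) (V (nxt k)) (V i) = 0.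
  apply/eqP; rewrite eq_le sumr_ge0 // andbT.
  by rewrite -(area_affine _ _ (conj sum_l bary_l)).
have terms0 := psumr_eq0P (fun i _ => term_ge0 i) sum_terms0.
move=> j jk jnk; move/eqP: (terms0 j isT).
by rewrite mulf_eq0 (gt_eqF (convV k j jk jnk)) orbF => /eqP.
Qed.

Lemma wachspress_on_edge V l x w k :
  ccw_convex_quad V -> prob4 l -> bary V l x -> is_wachspress V x w ->
  area (V k) (V (nxt k)) x <= 0 -> w =1 l.
Proof.
move=> convV prob_l bary_l [_ w_edge] x_right.
have l_out := hull_edge_support convV prob_l bary_l x_right.
have sum_edge (F : 'I_4 -> R) :
    \sum_i l i * F i = l k * F k + l (nxt k) * F (nxt k).
  rewrite (bigD1 k) //= (bigD1 (nxt k)) ?nxt_neq //=.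
  by rewrite big1 ?addr0 // => j /andP[jk jnk]; rewrite l_out ?mul0r.
have [l_ge0 sum_l] := prob_l.
have lk_eq : l k = 1 - l (nxt k).
  by rewrite -sum_l -(eq_bigr _ (fun i _ => mulr1 (l i))) sum_edge !mulr1 addrK.
have t_01 : 0 <= l (nxt k) <= 1 by rewrite l_ge0 -subr_ge0 -lk_eq l_ge0.
have x_edge : x = ((1 - l (nxt k)) * (V k).1 + l (nxt k) * (V (nxt k)).1,
                   (1 - l (nxt k)) * (V k).2 + l (nxt k) * (V (nxt k)).2).
  case: bary_l; rewrite !sum_edge lk_eq.
  by case: x {l_out x_right w_edge} => ? ? /= -> ->.
move=> i; rewrite (w_edge k _ t_01 x_edge i) -lk_eq.
have [->|ik] := eqVneq i k; first by rewrite eq_sym (negbTE (nxt_neq k)) addr0.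
have [->|ink] := eqVneq i (nxt k); first by rewrite add0r.
by rewrite add0r l_out.
Qed.

Lemma wach_w_moment V x : (forall i, area (V i) (V (nxt i)) x != 0) ->
  \sum_i wach_w V x i * ((V i).1 - x.1) = 0 /\
  \sum_i wach_w V x i * ((V i).2 - x.2) = 0.
Proof.
move=> A_neq0; move: (A_neq0 o0) (A_neq0 o1) (A_neq0 o2) (A_neq0 o3).
rewrite !big_ord4 /wach_w !(area_cycle x) ?nxt0 ?nxt1 ?nxt2 ?nxt3 ?prv0 ?prv1 ?prv2 ?prv3.
case: (V o0) (V o1) (V o2) (V o3) x {A_neq0} => [a0 b0] [a1 b1] [a2 b2] [a3 b3] [x1 x2].
rewrite /area /= !mulf_eq0 !invr_eq0 !pnatr_eq0 !orbF => h0 h1 h2 h3.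
by split; field; rewrite h0 h1 h2 h3.
Qed.

Lemma wach_w_gt0 V x : ccw_convex_quad V -> in_interior V x ->
  forall i, 0 < wach_w V x i.
Proof.
move=> convV x_int i; rewrite /wach_w (area_cycle x).
have vertex_gt0 : 0 < area (V (prv i)) (V i) (V (nxt i)).
  by rewrite -{2}(nxt_prv i); apply: convV; case: (ord4P i) => ->.
have prev_gt0 : 0 < area (V (prv i)) (V i) x by rewrite -{2}(nxt_prv i) x_int.
by rewrite divr_gt0 // mulr_gt0.
Qed.

Lemma sum_normalized_moment (I : finType) (W a : I -> R) (c : R) :
  \sum_i W i != 0 -> \sum_i W i * (a i - c) = 0 ->
  \sum_i W i / (\sum_j W j) * a i = c.
Proof.
move=> sum_neq0 moment0.
have Wa : \sum_i W i * a i = \sum_i W i * (a i - c) + c * \sum_i W i.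
  by rewrite mulr_sumr -big_split; apply: eq_bigr => i _ /=; ring.
under eq_bigr do rewrite mulrAC.
by rewrite -mulr_suml Wa moment0 add0r mulfK.
Qed.

Lemma wachspress_interior V x w : ccw_convex_quad V -> in_interior V x ->
  is_wachspress V x w -> affine_coords V x w.
Proof.
move=> convV x_int [w_int _]; have w_def := w_int x_int.
have sum_neq0 : \sum_j wach_w V x j != 0.
  by rewrite lt0r_neq0 // big_ord4 !addr_gt0 ?wach_w_gt0.
have [moment1 moment2] := wach_w_moment (fun i => lt0r_neq0 (x_int i)).
split; first by rewrite (eq_bigr _ (fun i _ => w_def i)) -mulr_suml mulfV.
by split; under eq_bigr do rewrite w_def; exact: sum_normalized_moment.
Qed.

Lemma wachspress_affine_coords V x w : ccw_convex_quad V -> in_poly V x ->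
  is_wachspress V x w -> affine_coords V x w.
Proof.
move=> convV [l [prob_l bary_l]] w_wach.
have [x_int|] := boolP [forall i, 0 < area (V i) (V (nxt i)) x].
  by apply: wachspress_interior => // i; apply: (forallP x_int).
rewrite negb_forall => /existsP[k]; rewrite -leNgt => x_right.
rewrite (funext (wachspress_on_edge convV prob_l bary_l w_wach x_right)).
by split; first case: prob_l.
Qed.

Lemma affine_null_cramer V d : affine_null V d ->
  [/\ area (V o0) (V o1) (V o2) * d o0 = - d o3 * area (V o1) (V o2) (V o3),
      area (V o0) (V o1) (V o2) * d o1 = d o3 * area (V o0) (V o2) (V o3) &
      area (V o0) (V o1) (V o2) * d o2 = - d o3 * area (V o0) (V o1) (V o3)].
Proof.
case=> S X Y.
have comb a b c :
  a * \sum_i d i + b * \sum_i d i * (V i).1 + c * \sum_i d i * (V i).2 = 0.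
  by rewrite S X Y; ring.
move: comb; rewrite !big_ord4.
case: (V o0) (V o1) (V o2) (V o3) => [a0 b0] [a1 b1] [a2 b2] [a3 b3] /= comb.
split; apply/eqP; rewrite -subr_eq0 /area /=; apply/eqP.
- by rewrite -(comb ((a1 * b2 - a2 * b1) / 2) ((b1 - b2) / 2) ((a2 - a1) / 2)); ring.
- by rewrite -(comb ((a2 * b0 - a0 * b2) / 2) ((b2 - b0) / 2) ((a0 - a2) / 2)); ring.
- by rewrite -(comb ((a0 * b1 - a1 * b0) / 2) ((b0 - b1) / 2) ((a1 - a0) / 2)); ring.
Qed.

Lemma affine_null_eq0 V d : area (V o0) (V o1) (V o2) != 0 ->
  affine_null V d -> d o3 = 0 -> forall i, d i = 0.
Proof.
move=> A_neq0 null_d d3_eq0 i; have [c0 c1 c2] := affine_null_cramer null_d.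
case: (ord4P i) => -> //; apply: (mulfI A_neq0);
  by rewrite mulr0 ?c0 ?c1 ?c2 d3_eq0 ?oppr0 mul0r.
Qed.

Lemma affine_null_parallel V d e : area (V o0) (V o1) (V o2) != 0 ->
  affine_null V d -> affine_null V e -> forall i, d i * e o3 = d o3 * e i.
Proof.
move=> A_neq0 null_d null_e i; apply: (mulfI A_neq0).
have [d0 d1 d2] := affine_null_cramer null_d.
have [e0 e1 e2] := affine_null_cramer null_e.
case: (ord4P i) => -> //; rewrite mulrA [RHS]mulrCA ?d0 ?d1 ?d2 ?e0 ?e1 ?e2; ring.
Qed.

Lemma discrepancy_scale (q w q' w' : 'I_4 -> R) (c : R) :
  (forall i, q i - w i = c * (q' i - w' i)) ->
  discrepancy q w = c *: discrepancy q' w'.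
Proof. by move=> qw; apply/rowP => i; rewrite !mxE qw. Qed.

End Quadrilateral.

Theorem corollary5p9 (R : realType) (V : 'I_4 -> (R * R)%type) :
  ccw_convex_quad V ->
  forall (x y : (R * R)%type) (qx wx qy wy : 'I_4 -> R),
    in_poly V x -> in_poly V y ->
    is_gibbs V x qx -> is_wachspress V x wx ->
    is_gibbs V y qy -> is_wachspress V y wy ->
    discrepancy qx wx != 0 -> discrepancy qy wy != 0 ->
    exists c : R, discrepancy qx wx = c *: discrepancy qy wy.
Proof.
move=> convV x y qx wx qy wy x_in y_in gibbs_x wach_x gibbs_y wach_y _ Dy_neq0.
have A_neq0 : area (V o0) (V o1) (V o2) != 0.
  by have := convV o0 o2 isT isT; rewrite nxt0 => /lt0r_neq0.
have null_x := affine_coords_sub (gibbs_affine_coords gibbs_x)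
  (wachspress_affine_coords convV x_in wach_x).
have null_y := affine_coords_sub (gibbs_affine_coords gibbs_y)
  (wachspress_affine_coords convV y_in wach_y).
have ey3_neq0 : qy o3 - wy o3 != 0.
  apply: contra Dy_neq0 => /eqP ey3_eq0.
  rewrite (@discrepancy_scale _ _ _ qy wy 0) ?scale0r // => i.
  by rewrite mul0r (affine_null_eq0 A_neq0 null_y ey3_eq0).
exists ((qx o3 - wx o3) / (qy o3 - wy o3)); apply: discrepancy_scale => i.
by rewrite mulrAC -(affine_null_parallel A_neq0 null_x null_y) mulfK.
Qed.
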